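(* Let $\kappa>0$, $u_0>0$, and let $u$ be the solution of $\frac{d}{dr}\big(u'/\sqrt{1+u'^2}\big)=\kappa u$, $u(0)=u_0$, $u'(0)=0$. Let $a>0$ and $0\le\gamma<\pi/2$ be such that $u$ is defined on $[0,a)$ and $\sin\psi(a)=\cos\gamma$, where $\sin\psi=u'/\sqrt{1+u'^2}$ (extended continuously to $r=a$). Then $$\frac{\cos\gamma}{a\kappa}-\frac a{\cos\gamma}+\frac{a\tan\gamma}2+\frac a{2\cos^2\gamma}\Big(\frac\pi2-\gamma\Big)<u_0<u_0^+<\frac{\cos\gamma}{a\kappa},$$ where $u_0^+$ is the number with $F(u_0^+;1/(\kappa u_0))=\cos\gamma/\kappa$, for $$F(x;R)=a(R+x)-\frac a2\sqrt{R^2-a^2}-\frac{R^2}2\arcsin\Big(\frac aR\Big).$$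
   Context: $u$ is the profile of a $\kappa$-cylindrical capillary surface $z=u(x)$ between vertical plates $x=\pm a$ with contact angle $\gamma$; $u_0$ is the center height. The function $x\mapsto F(x;R)$ is strictly increasing. *)

From Stdlib Require Import Reals.
From Coquelicot Require Import Coquelicot.
Open Scope R_scope.

Definition sin_psi (u : R -> R) (r : R) : R :=
  Derive u r / sqrt (1 + (Derive u r) ^ 2).

Definition capillary_profile (kappa u0 a gamma : R) (u : R -> R) : Prop :=
  (forall r, -a < r < a -> ex_derive u r) /\
  (forall r, -a < r < a -> is_derive (sin_psi u) r (kappa * u r)) /\
  u 0 = u0 /\ Derive u 0 = 0 /\
  filterlim (sin_psi u) (at_left a) (locally (cos gamma)).

Definition F (a x Rr : R) : R :=
  a * (Rr + x) - a / 2 * sqrt (Rr ^ 2 - a ^ 2) - Rr ^ 2 / 2 * asin (a / Rr).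

From Stdlib Require Import Reals Lra.
From Coquelicot Require Import Coquelicot.
Open Scope R_scope.

(* The profile is squeezed between two circular arcs through (0, u0).  The
   energy κ u^2 / 2 + cos ψ is conserved, so u >= u0 and (sin ψ)' = κ u gives
   sin ψ(r) > κ u0 r = r / R with R = 1 / (κ u0): u lies above the circle of
   radius R, and integrating (sin ψ)' = κ u once more over [0, a] yields
   κ (a u0 + ∫_0^a arc_R) < cos γ, i.e. u0 < u0^+; the arc integral is
   positive, whence u0^+ < cos γ / (a κ).  Conversely u increases, so
   sin ψ(r) / r increases towards cos γ / a: u lies below the circle of radius
   a / cos γ, and the same integration gives the lower bound for u0. *)

Lemma lt_of_is_derive_pos (f df : R -> R) x y : x < y ->
  (forall t, x <= t <= y -> is_derive f t (df t)) ->
  (forall t, x < t < y -> 0 < df t) -> f x < f y.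
Proof.
  intros Hxy Hd Hpos.
  destruct (MVT_cor2 f df x y Hxy) as [c [Hc Hcxy]].
  - intros t Ht. apply is_derive_Reals, Hd, Ht.
  - specialize (Hpos c Hcxy). nra.
Qed.

Lemma le_of_is_derive_nonneg (f df : R -> R) x y : x <= y ->
  (forall t, x <= t <= y -> is_derive f t (df t)) ->
  (forall t, x < t < y -> 0 <= df t) -> f x <= f y.
Proof.
  intros Hxy Hd Hpos. destruct (Req_dec x y) as [<-|Hne]; [lra|].
  destruct (MVT_cor2 f df x y ltac:(lra)) as [c [Hc Hcxy]].
  - intros t Ht. apply is_derive_Reals, Hd, Ht.
  - specialize (Hpos c Hcxy). nra.
Qed.

Lemma is_derive_Rminus (f g : R -> R) x df dg :
  is_derive f x df -> is_derive g x dg -> is_derive (fun t => f t - g t) x (df - dg).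
Proof. exact (is_derive_minus f g x df dg). Qed.

Lemma filterlim_minus_R {T} (F : (T -> Prop) -> Prop) {FF : Filter F}
    (f g : T -> R) l m :
  filterlim f F (locally l) -> filterlim g F (locally m) ->
  filterlim (fun x => f x - g x) F (locally (l - m)).
Proof.
  intros Hf Hg.
  eapply (filterlim_comp_2 f (fun x => - g x) Rplus Hf).
  - exact (filterlim_comp _ _ _ g Ropp _ _ _ Hg (filterlim_opp m)).
  - exact (filterlim_plus l (- m)).
Qed.

Lemma filterlim_at_left_continuous (g : R -> R) a :
  continuous g a -> filterlim g (at_left a) (locally (g a)).
Proof. apply filterlim_filter_le_1, filter_le_within. Qed.

Lemma le_of_filterlim_at_left (f : R -> R) a b m l : b < a ->
  filterlim f (at_left a) (locally l) ->
  (forall t, b <= t < a -> m <= f t) -> m <= l.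
Proof.
  intros Hba Hl Hm.
  apply (filterlim_le (F := at_left a) (fun _ => m) f m l).
  - assert (Hd : 0 < a - b) by lra.
    exists (mkposreal _ Hd). intros t Ht Hta. apply Hm.
    apply Rabs_lt_between' in Ht. simpl in Ht. lra.
  - apply filterlim_const.
  - exact Hl.
Qed.

Lemma lt_of_filterlim_at_left_of_is_derive_pos (h dh : R -> R) a l : 0 < a ->
  (forall t, 0 <= t < a -> is_derive h t (dh t)) ->
  (forall t, 0 < t < a -> 0 < dh t) ->
  filterlim h (at_left a) (locally l) -> h 0 < l.
Proof.
  intros Ha Hd Hpos Hl.
  assert (Hlt : forall x y, 0 <= x < y -> y < a -> h x < h y).
  { intros x y Hxy Hya. apply (lt_of_is_derive_pos h dh); [lra| |].
    - intros t Ht. apply Hd. lra.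
    - intros t Ht. apply Hpos. lra. }
  (* the positive gap h (a / 2) - h 0 survives the passage to the limit *)
  apply Rlt_le_trans with (h (a / 2)); [apply Hlt; lra|].
  apply (le_of_filterlim_at_left h a (a / 2)); [lra | exact Hl |].
  intros t Ht. destruct (Req_dec t (a / 2)) as [->|Hne]; [lra|].
  apply Rlt_le, Hlt; lra.
Qed.

Definition tan_of_sin (p : R) : R := p / sqrt (1 - p ^ 2).

Lemma tan_of_sin_lt p q : 0 <= p -> p < q -> q < 1 -> tan_of_sin p < tan_of_sin q.
Proof.
  intros Hp Hpq Hq. unfold tan_of_sin.
  assert (Hsq : 0 < sqrt (1 - q ^ 2)) by (apply sqrt_lt_R0; nra).
  assert (Hsqpq : sqrt (1 - q ^ 2) < sqrt (1 - p ^ 2)) by (apply sqrt_lt_1; nra).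
  apply Rlt_le_trans with (q / sqrt (1 - p ^ 2)).
  - apply Rmult_lt_compat_r; [apply Rinv_0_lt_compat|]; lra.
  - apply Rmult_le_compat_l; [lra|]. apply Rlt_le, Rinv_lt_contravar; nra.
Qed.

Lemma sin_of_tan_sq_lt_1 d : (d / sqrt (1 + d ^ 2)) ^ 2 < 1.
Proof.
  assert (Hq : 0 < sqrt (1 + d ^ 2)) by (apply sqrt_lt_R0; nra).
  assert (Hq2 : sqrt (1 + d ^ 2) ^ 2 = 1 + d ^ 2) by (apply pow2_sqrt; nra).
  set (q := sqrt (1 + d ^ 2)) in *.
  replace ((d / q) ^ 2) with (d ^ 2 / q ^ 2) by (field; lra).
  rewrite Hq2. apply Rlt_div_l; nra.
Qed.

Lemma tan_of_sin_of_tan d : tan_of_sin (d / sqrt (1 + d ^ 2)) = d.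
Proof.
  unfold tan_of_sin.
  assert (Hq : 0 < sqrt (1 + d ^ 2)) by (apply sqrt_lt_R0; nra).
  assert (Hq2 : sqrt (1 + d ^ 2) ^ 2 = 1 + d ^ 2) by (apply pow2_sqrt; nra).
  set (q := sqrt (1 + d ^ 2)) in *.
  assert (E : 1 - (d / q) ^ 2 = (1 / q) ^ 2).
  { replace ((d / q) ^ 2) with (d ^ 2 / q ^ 2) by (field; lra).
    replace ((1 / q) ^ 2) with (1 / q ^ 2) by (field; lra).
    rewrite Hq2. field. nra. }
  rewrite E.
  rewrite sqrt_pow2 by (apply Rlt_le, Rdiv_lt_0_compat; lra).
  field. lra.
Qed.

Lemma is_derive_asin x : -1 < x < 1 -> is_derive asin x (1 / sqrt (1 - x ^ 2)).
Proof.
  intros Hx. apply is_derive_Reals.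
  apply derive_pt_eq_1 with (derivable_pt_asin x Hx).
  rewrite derive_pt_asin. unfold Rsqr. f_equal. f_equal. ring.
Qed.

Lemma continuous_asin_1 : continuous asin 1.
Proof.
  apply filterlim_locally. intros eps. rewrite asin_1.
  assert (Hpi := PI_RGT_0).
  set (e := Rmin eps (PI / 2) / 2).
  assert (He : 0 < e < PI / 2 /\ e < eps).
  { pose proof (Rmin_l eps (PI / 2)); pose proof (Rmin_r eps (PI / 2)).
    pose proof (Rmin_pos eps (PI / 2) (cond_pos eps) ltac:(lra)). unfold e; lra. }
  assert (Hs : 0 < sin (PI / 2 - e) < 1).
  { split; [apply sin_gt_0 | rewrite <- sin_PI2; apply sin_increasing_1]; lra. }
  assert (Hd : 0 < 1 - sin (PI / 2 - e)) by lra.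
  exists (mkposreal _ Hd). intros x Hx. apply Rabs_lt_between' in Hx. simpl in Hx.
  apply Rabs_lt_between'.
  destruct (Rle_dec 1 x) as [H1|H1].
  - (* [asin] is extended by [PI / 2] beyond 1 *)
    unfold asin. destruct (Rle_dec x (-1)); [lra|]. destruct (Rle_dec 1 x); [|lra].
    pose proof (cond_pos eps); lra.
  - assert (Hb := asin_bound x).
    enough (PI / 2 - e <= asin x) by lra.
    apply Rnot_lt_le. intros Hlt.
    assert (Hsin : sin (asin x) < sin (PI / 2 - e)) by (apply sin_increasing_1; lra).
    rewrite sin_asin in Hsin; lra.
Qed.

Lemma continuous_asin x : 0 < x <= 1 -> continuous asin x.
Proof.
  intros Hx. destruct (Req_dec x 1) as [->|Hne]; [exact continuous_asin_1|].
  apply (@ex_derive_continuous R_AbsRing R_NormedModule).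
  eexists. apply is_derive_asin. lra.
Qed.

(* The circle of radius [rho] tangent to the axis at the origin, and the
   integral [arc_area rho r] of [arc rho] over [0, r]. *)
Definition arc (rho t : R) : R := rho - sqrt (rho ^ 2 - t ^ 2).

Definition arc_area (rho r : R) : R :=
  rho * r - r / 2 * sqrt (rho ^ 2 - r ^ 2) - rho ^ 2 / 2 * asin (r / rho).

Lemma arc_0 rho : 0 <= rho -> arc rho 0 = 0.
Proof.
  intros Hrho. unfold arc. replace (rho ^ 2 - 0 ^ 2) with (rho ^ 2) by ring.
  rewrite sqrt_pow2; lra.
Qed.

Lemma F_eq_arc_area a x rho : F a x rho = a * x + arc_area rho a.
Proof. unfold F, arc_area. ring. Qed.

Lemma sqrt_1_minus_div_sq rho t : 0 < rho ->
  sqrt (1 - (t / rho) ^ 2) = sqrt (rho ^ 2 - t ^ 2) / rho.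
Proof.
  intros Hrho. replace (1 - (t / rho) ^ 2) with ((rho ^ 2 - t ^ 2) / rho ^ 2) by (field; lra).
  rewrite sqrt_div_alt by (apply pow_lt; lra). rewrite sqrt_pow2; lra.
Qed.

Lemma is_derive_arc rho t : 0 < rho -> -rho < t < rho ->
  is_derive (arc rho) t (tan_of_sin (t / rho)).
Proof.
  intros Hrho Ht. unfold arc, tan_of_sin. rewrite sqrt_1_minus_div_sq by lra.
  assert (0 < sqrt (rho ^ 2 - t ^ 2)) by (apply sqrt_lt_R0; nra).
  auto_derive; [nra|].
  replace (rho * (rho * 1) + - (t * (t * 1))) with (rho ^ 2 - t ^ 2) by ring.
  field. lra.
Qed.

Lemma is_derive_arc_area rho r : 0 < rho -> -rho < r < rho ->
  is_derive (arc_area rho) r (arc rho r).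
Proof.
  intros Hrho Hr. unfold arc_area, arc.
  assert (Hasin : is_derive asin (r / rho) (rho / sqrt (rho ^ 2 - r ^ 2))).
  { replace (rho / sqrt (rho ^ 2 - r ^ 2)) with (1 / sqrt (1 - (r / rho) ^ 2)).
    - apply is_derive_asin. split; [apply Rlt_div_r | apply Rlt_div_l]; lra.
    - rewrite sqrt_1_minus_div_sq by lra.
      assert (0 < sqrt (rho ^ 2 - r ^ 2)) by (apply sqrt_lt_R0; nra). field. lra. }
  assert (HS : 0 < sqrt (rho ^ 2 - r ^ 2)) by (apply sqrt_lt_R0; nra).
  assert (HS2 : sqrt (rho ^ 2 - r ^ 2) ^ 2 = rho ^ 2 - r ^ 2) by (apply pow2_sqrt; nra).
  auto_derive.
  - split; [nra | split; [eexists; exact Hasin | exact I]].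
  - replace (Derive (fun x => asin x) (r * / rho)) with (rho / sqrt (rho ^ 2 - r ^ 2))
      by (symmetry; apply is_derive_unique; exact Hasin).
    replace (rho * (rho * 1) + - (r * (r * 1))) with (rho ^ 2 - r ^ 2) by ring.
    set (S := sqrt (rho ^ 2 - r ^ 2)) in *.
    apply (Rmult_eq_reg_r (2 * S)); [|lra].
    field_simplify; [rewrite HS2; field | split; lra].
Qed.

Lemma arc_area_0 rho : arc_area rho 0 = 0.
Proof.
  unfold arc_area. replace (0 / rho) with 0 by (unfold Rdiv; ring).
  rewrite asin_0. unfold Rdiv. ring.
Qed.

Lemma arc_area_pos rho r : 0 < r < rho -> 0 < arc_area rho r.
Proof.
  intros Hr. rewrite <- (arc_area_0 rho).
  apply (lt_of_is_derive_pos (arc_area rho) (arc rho)); [lra| |].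
  - intros t Ht. apply is_derive_arc_area; lra.
  - intros t Ht. unfold arc.
    assert (Hsqrt : sqrt (rho ^ 2 - t ^ 2) < sqrt (rho ^ 2)) by (apply sqrt_lt_1_alt; nra).
    rewrite sqrt_pow2 in Hsqrt; lra.
Qed.

Lemma continuous_arc_area rho r : 0 < r <= rho -> continuous (arc_area rho) r.
Proof.
  intros Hr. unfold arc_area.
  apply (@continuous_minus _ R_AbsRing R_NormedModule);
    [apply (@continuous_minus _ R_AbsRing R_NormedModule) | apply (@continuous_mult _ R_AbsRing)].
  - apply (@ex_derive_continuous R_AbsRing R_NormedModule). auto_derive. auto.
  - apply (@continuous_mult _ R_AbsRing).
    + apply (@ex_derive_continuous R_AbsRing R_NormedModule). auto_derive. auto.
    + apply (continuous_comp (fun t => rho ^ 2 - t ^ 2) sqrt).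
      * apply (@ex_derive_continuous R_AbsRing R_NormedModule). auto_derive. auto.
      * apply continuous_sqrt.
  - apply continuous_const.
  - apply (continuous_comp (fun t => t / rho) asin).
    + apply (@ex_derive_continuous R_AbsRing R_NormedModule). auto_derive. lra.
    + apply continuous_asin. split; [apply Rdiv_lt_0_compat | apply Rle_div_l]; lra.
Qed.

Lemma arc_area_contact a gamma : 0 < a -> 0 <= gamma < PI / 2 ->
  arc_area (a / cos gamma) a =
  a * (a / cos gamma - a * tan gamma / 2 - a / (2 * cos gamma ^ 2) * (PI / 2 - gamma)).
Proof.
  intros Ha Hg.
  assert (Hc : 0 < cos gamma) by (apply cos_gt_0; lra).
  assert (Hs : 0 <= sin gamma) by (apply sin_ge_0; lra).
  assert (Hasin : asin (a / (a / cos gamma)) = PI / 2 - gamma).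
  { replace (a / (a / cos gamma)) with (sin (PI / 2 - gamma)) by (rewrite sin_shift; field; lra).
    apply asin_sin. pose proof PI_RGT_0. lra. }
  assert (Hsqrt : sqrt ((a / cos gamma) ^ 2 - a ^ 2) = a * tan gamma).
  { assert (Htan : 0 <= a * tan gamma).
    { unfold tan. apply Rmult_le_pos, Rdiv_le_0_compat; lra. }
    rewrite <- (sqrt_pow2 _ Htan). f_equal.
    pose proof (sin2_cos2 gamma) as Hpyth. unfold Rsqr in Hpyth. unfold tan.
    field_simplify; [|lra|lra]. replace (sin gamma ^ 2) with (1 - cos gamma ^ 2) by nra.
    field. lra. }
  unfold arc_area. rewrite Hasin, Hsqrt. field. lra.
Qed.

Lemma is_derive_affine_arc_area k x rho r : 0 < rho -> -rho < r < rho ->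
  is_derive (fun t => k * (x * t + arc_area rho t)) r (k * (x + arc rho r)).
Proof.
  intros Hrho Hr. apply (is_derive_scal (fun t => x * t + arc_area rho t)).
  apply (@is_derive_plus R_AbsRing R_NormedModule); [|apply is_derive_arc_area; lra].
  auto_derive; auto; ring.
Qed.

Lemma continuous_affine_arc_area k x rho r : 0 < r <= rho ->
  continuous (fun t => k * (x * t + arc_area rho t)) r.
Proof.
  intros Hr. apply (@continuous_mult _ R_AbsRing); [apply continuous_const|].
  apply (@continuous_plus _ R_AbsRing R_NormedModule); [|apply continuous_arc_area, Hr].
  apply (@ex_derive_continuous R_AbsRing R_NormedModule). auto_derive. auto.
Qed.

Section CapillaryProfile.

(* [s] stands for sin ψ, so that the profile equation becomes the system
   u' = tan ψ, (sin ψ)' = κ u; [c] is the value of sin ψ at the wall. *)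
Variables (kappa u0 a c : R) (u s : R -> R).

Hypothesis kappa_pos : 0 < kappa.
Hypothesis u0_pos : 0 < u0.
Hypothesis a_pos : 0 < a.
Hypothesis is_derive_u : forall r, -a < r < a -> is_derive u r (tan_of_sin (s r)).
Hypothesis is_derive_s : forall r, -a < r < a -> is_derive s r (kappa * u r).
Hypothesis s_sq_lt_1 : forall r, s r ^ 2 < 1.
Hypothesis u_0 : u 0 = u0.
Hypothesis s_0 : s 0 = 0.
Hypothesis s_lim : filterlim s (at_left a) (locally c).

Lemma u0_sq_le_u_sq r : 0 <= r < a -> u0 ^ 2 <= u r ^ 2.
Proof.
  intros Hr.
  (* κ u^2 / 2 + cos ψ is a first integral *)
  set (energy t := kappa * u t ^ 2 / 2 + sqrt (1 - s t ^ 2)).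
  assert (Hconst : energy 0 <= energy r).
  { apply (le_of_is_derive_nonneg energy (fun _ => 0)); [lra | | intros; lra].
    intros t Ht. unfold energy.
    assert (Hu := is_derive_u t ltac:(lra)). assert (Hs := is_derive_s t ltac:(lra)).
    assert (Hsq : 0 < sqrt (1 - s t ^ 2)) by (apply sqrt_lt_R0; pose proof (s_sq_lt_1 t); lra).
    auto_derive.
    - repeat split; [eexists; exact Hu | eexists; exact Hs | pose proof (s_sq_lt_1 t); lra].
    - replace (Derive (fun x => u x) t) with (tan_of_sin (s t))
        by (symmetry; apply is_derive_unique, Hu).
      replace (Derive (fun x => s x) t) with (kappa * u t)
        by (symmetry; apply is_derive_unique, Hs).
      unfold tan_of_sin.
      replace (1 + - (s t * (s t * 1))) with (1 - s t ^ 2) by ring.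
      field. lra. }
  unfold energy in Hconst. rewrite s_0, u_0 in Hconst.
  replace (1 - 0 ^ 2) with 1 in Hconst by ring. rewrite sqrt_1 in Hconst.
  assert (sqrt (1 - s r ^ 2) <= 1).
  { rewrite <- sqrt_1 at 2. apply sqrt_le_1_alt. pose proof (pow2_ge_0 (s r)). lra. }
  nra.
Qed.

Lemma u0_le_u r : 0 <= r < a -> u0 <= u r.
Proof.
  (* u cannot cross 0, since u^2 >= u0^2 > 0 *)
  intros Hr. apply Rnot_lt_le. intros Hlt.
  assert (Hsq := u0_sq_le_u_sq r Hr).
  assert (Hr0 : 0 < r) by (destruct (Req_dec r 0) as [->|]; [rewrite u_0 in Hlt; lra | lra]).
  destruct (Ranalysis5.IVT_interv (fun t => - u t) 0 r) as [z [Hz Hz0]];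
    [| lra | rewrite u_0; lra | nra |].
  - intros t Ht. apply (continuity_pt_opp u), continuity_pt_filterlim.
    apply (@ex_derive_continuous R_AbsRing R_NormedModule).
    eexists. apply is_derive_u. lra.
  - assert (Hz' := u0_sq_le_u_sq z ltac:(lra)). nra.
Qed.

Lemma s_pos r : 0 < r < a -> 0 < s r.
Proof.
  intros Hr. rewrite <- s_0.
  apply (lt_of_is_derive_pos s (fun t => kappa * u t)); [lra| |].
  - intros t Ht. apply is_derive_s. lra.
  - intros t Ht. pose proof (u0_le_u t ltac:(lra)). nra.
Qed.

Lemma u_lt x y : 0 <= x -> x < y -> y < a -> u x < u y.
Proof.
  intros Hx Hxy Hya. apply (lt_of_is_derive_pos u (fun t => tan_of_sin (s t))); [lra| |].
  - intros t Ht. apply is_derive_u. lra.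
  - intros t Ht. apply Rdiv_lt_0_compat; [apply s_pos; lra|].
    apply sqrt_lt_R0. pose proof (s_sq_lt_1 t). lra.
Qed.

Lemma kappa_u0_mul_lt_s r : 0 < r < a -> kappa * u0 * r < s r.
Proof.
  intros Hr.
  enough (Hlt : s 0 - kappa * u0 * 0 < s r - kappa * u0 * r) by (rewrite s_0 in Hlt; lra).
  apply (lt_of_is_derive_pos (fun t => s t - kappa * u0 * t) (fun t => kappa * u t - kappa * u0));
    [lra| |].
  - intros t Ht. apply is_derive_Rminus; [apply is_derive_s; lra | auto_derive; auto; ring].
  - intros t Ht. rewrite <- u_0. pose proof (u_lt 0 t ltac:(lra) ltac:(lra) ltac:(lra)). nra.
Qed.

Lemma kappa_u0_mul_a_lt_c : kappa * u0 * a < c.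
Proof.
  enough (Hlt : s 0 - kappa * u0 * 0 < c - kappa * u0 * a) by (rewrite s_0 in Hlt; lra).
  apply (lt_of_filterlim_at_left_of_is_derive_pos (fun t => s t - kappa * u0 * t)
    (fun t => kappa * u t - kappa * u0) a); [lra | | |].
  - intros t Ht. apply is_derive_Rminus; [apply is_derive_s; lra | auto_derive; auto; ring].
  - intros t Ht. rewrite <- u_0. pose proof (u_lt 0 t ltac:(lra) ltac:(lra) ltac:(lra)). nra.
  - apply (filterlim_minus_R _ s (fun t => kappa * u0 * t) c _ s_lim).
    apply filterlim_at_left_continuous.
    apply (@ex_derive_continuous R_AbsRing R_NormedModule). auto_derive. auto.
Qed.

Lemma s_lt_kappa_mul_u r : 0 < r < a -> s r < kappa * r * u r.
Proof.
  intros Hr.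
  enough (Hlt : kappa * 0 * u 0 - s 0 < kappa * r * u r - s r) by (rewrite s_0 in Hlt; lra).
  apply (lt_of_is_derive_pos (fun t => kappa * t * u t - s t)
    (fun t => kappa * t * tan_of_sin (s t))); [lra| |].
  - intros t Ht. assert (Hu := is_derive_u t ltac:(lra)). assert (Hs := is_derive_s t ltac:(lra)).
    auto_derive.
    + repeat split; eexists; eassumption.
    + replace (Derive (fun x => u x) t) with (tan_of_sin (s t))
        by (symmetry; apply is_derive_unique, Hu).
      replace (Derive (fun x => s x) t) with (kappa * u t)
        by (symmetry; apply is_derive_unique, Hs).
      ring.
  - intros t Ht. apply Rmult_lt_0_compat; [nra|].
    apply Rdiv_lt_0_compat; [apply s_pos; lra|].
    apply sqrt_lt_R0. pose proof (s_sq_lt_1 t). lra.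
Qed.

Lemma s_div_lt r b : 0 < r -> r < b -> b < a -> s r / r < s b / b.
Proof.
  intros Hr Hrb Hba.
  enough (Hlt : r * s r - r * s r < r * s b - b * s r).
  { apply (Rmult_lt_reg_r (r * b)); [nra|].
    replace (s r / r * (r * b)) with (b * s r) by (field; lra).
    replace (s b / b * (r * b)) with (r * s b) by (field; lra). lra. }
  apply (lt_of_is_derive_pos (fun t => r * s t - t * s r)
    (fun t => r * (kappa * u t) - s r)); [lra| |].
  - intros t Ht. apply is_derive_Rminus.
    + apply is_derive_scal, is_derive_s. lra.
    + auto_derive; auto; ring.
  - intros t Ht. pose proof (s_lt_kappa_mul_u r ltac:(lra)).
    pose proof (u_lt r t ltac:(lra) ltac:(lra) ltac:(lra)).
    assert (0 < kappa * r) by nra. nra.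
Qed.

Lemma s_lt_c_mul_div r : 0 < r < a -> s r < c * r / a.
Proof.
  intros Hr. set (b := (r + a) / 2). set (M := s b / b).
  assert (Hrb : s r / r < M) by (apply s_div_lt; unfold b; lra).
  assert (HMa : 0 <= c - M * a).
  { apply (le_of_filterlim_at_left (fun t => s t - M * t) a b); [unfold b; lra | |].
    - apply (filterlim_minus_R _ s (fun t => M * t) c _ s_lim).
      apply filterlim_at_left_continuous.
      apply (@ex_derive_continuous R_AbsRing R_NormedModule). auto_derive. auto.
    - intros t Ht. assert (Hb : 0 < b) by (unfold b; lra).
      destruct (Req_dec t b) as [->|Hne]; [unfold M; field_simplify; lra |].
      assert (HMt : M < s t / t) by (apply s_div_lt; lra).
      apply (Rmult_lt_compat_r t) in HMt; [|lra].
      replace (s t / t * t) with (s t) in HMt by (field; lra). lra. }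
  apply (Rmult_lt_reg_r (/ r)); [apply Rinv_0_lt_compat; lra|].
  replace (c * r / a * / r) with (c / a) by (field; lra).
  apply Rlt_le_trans with M; [exact Hrb|].
  apply (Rmult_le_reg_r a); [lra|]. replace (c / a * a) with c by (field; lra). lra.
Qed.

Lemma arc_lt_u rho : 0 < rho -> a <= rho -> (forall r, 0 < r < a -> r / rho < s r) ->
  forall r, 0 < r < a -> u0 + arc rho r < u r.
Proof.
  intros Hrho Harho Hs r Hr.
  enough (Hlt : u 0 - arc rho 0 < u r - arc rho r) by (rewrite u_0, arc_0 in Hlt; lra).
  apply (lt_of_is_derive_pos (fun t => u t - arc rho t)
    (fun t => tan_of_sin (s t) - tan_of_sin (t / rho))); [lra| |].
  - intros t Ht. apply is_derive_Rminus; [apply is_derive_u | apply is_derive_arc]; lra.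
  - intros t Ht. assert (Hst := Hs t ltac:(lra)).
    assert (0 <= t / rho) by (apply Rlt_le, Rdiv_lt_0_compat; lra).
    assert (s t < 1) by (pose proof (s_sq_lt_1 t); nra).
    pose proof (tan_of_sin_lt (t / rho) (s t)). lra.
Qed.

Lemma u_lt_arc rho : 0 < rho -> a <= rho -> (forall r, 0 < r < a -> s r < r / rho) ->
  forall r, 0 < r < a -> u r < u0 + arc rho r.
Proof.
  intros Hrho Harho Hs r Hr.
  enough (Hlt : arc rho 0 - u 0 < arc rho r - u r) by (rewrite u_0, arc_0 in Hlt; lra).
  apply (lt_of_is_derive_pos (fun t => arc rho t - u t)
    (fun t => tan_of_sin (t / rho) - tan_of_sin (s t))); [lra| |].
  - intros t Ht. apply is_derive_Rminus; [apply is_derive_arc | apply is_derive_u]; lra.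
  - intros t Ht. assert (Hst := Hs t ltac:(lra)). assert (Hpos := s_pos t ltac:(lra)).
    assert (t / rho < 1) by (apply Rlt_div_l; lra).
    pose proof (tan_of_sin_lt (s t) (t / rho)). lra.
Qed.

Lemma kappa_area_lt_c rho : 0 < rho -> a <= rho ->
  (forall r, 0 < r < a -> u0 + arc rho r < u r) ->
  kappa * (u0 * a + arc_area rho a) < c.
Proof.
  intros Hrho Harho Hu.
  set (G t := kappa * (u0 * t + arc_area rho t)).
  enough (Hlt : s 0 - G 0 < c - G a)
    by (unfold G in Hlt; rewrite s_0, arc_area_0 in Hlt; lra).
  apply (lt_of_filterlim_at_left_of_is_derive_pos (fun t => s t - G t)
    (fun t => kappa * u t - kappa * (u0 + arc rho t)) a); [lra | | |].
  - intros t Ht. apply is_derive_Rminus;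
      [apply is_derive_s | apply is_derive_affine_arc_area]; lra.
  - intros t Ht. pose proof (Hu t Ht). nra.
  - apply (filterlim_minus_R _ s G c _ s_lim), filterlim_at_left_continuous.
    apply continuous_affine_arc_area. lra.
Qed.

Lemma c_lt_kappa_area rho : 0 < rho -> a <= rho ->
  (forall r, 0 < r < a -> u r < u0 + arc rho r) ->
  c < kappa * (u0 * a + arc_area rho a).
Proof.
  intros Hrho Harho Hu.
  set (G t := kappa * (u0 * t + arc_area rho t)).
  enough (Hlt : G 0 - s 0 < G a - c)
    by (unfold G in Hlt; rewrite s_0, arc_area_0 in Hlt; lra).
  apply (lt_of_filterlim_at_left_of_is_derive_pos (fun t => G t - s t)
    (fun t => kappa * (u0 + arc rho t) - kappa * u t) a); [lra | | |].
  - intros t Ht. apply is_derive_Rminus;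
      [apply is_derive_affine_arc_area | apply is_derive_s]; lra.
  - intros t Ht. pose proof (Hu t Ht). nra.
  - apply (filterlim_minus_R _ G s _ c), s_lim.
    apply filterlim_at_left_continuous, continuous_affine_arc_area. lra.
Qed.

Lemma a_lt_radius_kappa_area_lt_c : c <= 1 ->
  a < 1 / (kappa * u0) /\ kappa * (u0 * a + arc_area (1 / (kappa * u0)) a) < c.
Proof.
  intros Hc. set (rho := 1 / (kappa * u0)).
  assert (Hrho : 0 < rho) by (apply Rdiv_lt_0_compat; nra).
  assert (Harho : a < rho).
  { apply Rlt_div_r; [nra|]. pose proof kappa_u0_mul_a_lt_c. lra. }
  split; [exact Harho|].
  apply kappa_area_lt_c; [lra | lra |].
  apply arc_lt_u; [lra | lra |].
  intros r Hr. replace (r / rho) with (kappa * u0 * r) by (unfold rho; field; nra).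
  apply kappa_u0_mul_lt_s, Hr.
Qed.

(* The circle of radius a / c reaches the wall with sin ψ = c. *)
Lemma c_lt_kappa_area_contact : 0 < c <= 1 -> c < kappa * (u0 * a + arc_area (a / c) a).
Proof.
  intros Hc.
  assert (Hrho : 0 < a / c) by (apply Rdiv_lt_0_compat; lra).
  assert (Harho : a <= a / c) by (apply Rle_div_r; nra).
  apply c_lt_kappa_area; [lra | lra |].
  apply u_lt_arc; [lra | lra |].
  intros r Hr. replace (r / (a / c)) with (c * r / a) by (field; lra).
  apply s_lt_c_mul_div, Hr.
Qed.

End CapillaryProfile.

Lemma is_derive_tan_of_sin_psi (u : R -> R) a :
  (forall r, -a < r < a -> ex_derive u r) ->
  forall r, -a < r < a -> is_derive u r (tan_of_sin (sin_psi u r)).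
Proof. intros Hu r Hr. unfold sin_psi. rewrite tan_of_sin_of_tan. apply Derive_correct, Hu, Hr. Qed.

Theorem mainTheorem10 (kappa u0 a gamma : R) (u : R -> R) :
  0 < kappa -> 0 < u0 -> 0 < a -> 0 <= gamma < PI / 2 ->
  capillary_profile kappa u0 a gamma u ->
  cos gamma / (a * kappa) - a / cos gamma + a * tan gamma / 2
    + a / (2 * (cos gamma) ^ 2) * (PI / 2 - gamma) < u0 /\
  (exists u0p, F a u0p (1 / (kappa * u0)) = cos gamma / kappa) /\
  (forall u0p, F a u0p (1 / (kappa * u0)) = cos gamma / kappa ->
     u0 < u0p /\ u0p < cos gamma / (a * kappa)).
Proof.
  intros Hk Hu0 Ha Hg [Hex [Hs [Hu00 [HD0 Hlim]]]].
  assert (Hc : 0 < cos gamma <= 1) by (split; [apply cos_gt_0 | apply COS_bound]; lra).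
  assert (Hs0 : sin_psi u 0 = 0) by (unfold sin_psi; rewrite HD0; unfold Rdiv; ring).
  assert (Hu := is_derive_tan_of_sin_psi u a Hex).
  assert (Hsq : forall r, sin_psi u r ^ 2 < 1) by (intros r; apply sin_of_tan_sq_lt_1).
  destruct (a_lt_radius_kappa_area_lt_c kappa u0 a (cos gamma) u (sin_psi u)
              Hk Hu0 Ha Hu Hs Hsq Hu00 Hs0 Hlim (proj2 Hc)) as [HaR Hupper].
  assert (Hlower := c_lt_kappa_area_contact kappa u0 a (cos gamma) u (sin_psi u)
                      Hk Hu0 Ha Hu Hs Hsq Hu00 Hs0 Hlim Hc).
  rewrite arc_area_contact in Hlower by lra.
  set (A := arc_area (1 / (kappa * u0)) a) in *.
  assert (HA : 0 < A) by (apply arc_area_pos; lra).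
  split; [|split].
  - enough (cos gamma / (a * kappa) < u0 + (a / cos gamma - a * tan gamma / 2
              - a / (2 * cos gamma ^ 2) * (PI / 2 - gamma))) by lra.
    apply Rlt_div_l; [nra | lra].
  - exists ((cos gamma / kappa - A) / a). rewrite F_eq_arc_area. fold A. field. lra.
  - intros u0p Hu0p. rewrite F_eq_arc_area in Hu0p. fold A in Hu0p.
    assert (Hflux : kappa * (a * u0p + A) = cos gamma) by (rewrite Hu0p; field; lra).
    split.
    + apply (Rmult_lt_reg_l (kappa * a)); [nra | lra].
    + apply Rlt_div_r; nra.
Qed.
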